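(* Let $k$ be an infinite Brauer field, let $d\ge 1$, assume that $\Sigma^*((d))$ holds, and fix $e\in\{0,\ldots,d\}\setminus\{1\}$. There is a constant $C(d)$ such that the following holds. Let $a_1,\ldots,a_n\in k$ be arbitrary and $b_1,\ldots,b_n\in k$ nonzero, and for $x,y\in k^n$ put $f(x,y)=a_1x_1^ey_1^{d-e}+\cdots+a_nx_n^ey_n^{d-e}$ and $g(x,y)=b_1x_1y_1^{d-1}+\cdots+b_nx_ny_n^{d-1}$. If $n>C(d)$, then there exist $x,y\in k^n$ with $f(x,y)=0$ and $g(x,y)\ne 0$.
   Context: A field $k$ is a Brauer field if for every $d\ge 1$ there is $N_k(d)$ such that every equation $a_1x_1^d+\cdots+a_nx_n^d=0$ with $n>N_k(d)$, $a_i\in k$, has a non-trivial solution in $k^n$. Multi-degrees are tuples $(e_1\ge\cdots\ge e_s\ge 1)$ of integers compared lexicographically. Strength: for a homogeneous $f$ of degree $d>0$, $\operatorname{str}(f)$ is the minimal $s$ with $f=\sum_{t=1}^s g_th_t$, $g_t,h_t$ homogeneous over $k$ of degrees $<d$; the strength of a tuple is the minimal strength of a nontrivial $k$-linear combination of its members of equal degree. $\Sigma(\underline{e})$ is the statement: there is a constant $C$ such that for every finite-dimensional $k$-vector space $U$ and every tuple $\underline{h}$ of homogeneous polynomials on $U$ of multi-degree $\underline{e}$ with $\operatorname{str}(\underline{h})>C$, the $k$-points of the common zero locus $Z(\underline{h})$ are Zariski dense. $\Sigma^*((d))$ is the statement that $\Sigma(\underline{e})$ holds for every multi-degree $\underline{e}$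 with first entry $<d$. *)

From HB Require Import structures.
From mathcomp Require Import all_boot all_order all_algebra.
From mathcomp Require Import mpoly.
Set Implicit Arguments.
Unset Strict Implicit.
Unset Printing Implicit Defensive.
Import Order.TTheory GRing.Theory.
Local Open Scope ring_scope.

Definition homog_of {k : fieldType} {m : nat} (d : nat) (p : {mpoly k[m]}) : bool :=
  p \is @ishomog1 m k d (Measure.clone _ (@mdeg m) _).

Definition Brauer (k : fieldType) : Prop :=
  forall d : nat, (1 <= d)%N ->
    exists N : nat, forall (n : nat) (a : 'I_n -> k), (N < n)%N ->
      exists x : 'I_n -> k, (exists i, x i != 0) /\ \sum_(i < n) a i * x i ^+ d = 0.

Definition infinite_field (k : fieldType) : Prop :=
  forall s : seq k, exists x : k, x \notin s.

(* So "str f <= C" iff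
   exists s <= C with str_decomp d f s, and "str f > C" is its negation. *)
Definition str_decomp {k : fieldType} {m : nat} (d : nat) (f : {mpoly k[m]}) (s : nat) : Prop :=
  exists (g h : 'I_s -> {mpoly k[m]}) (a b : 'I_s -> nat),
    (forall t, (a t < d)%N /\ (b t < d)%N /\ homog_of (a t) (g t) /\ homog_of (b t) (h t))
    /\ f = \sum_(t < s) g t * h t.

Definition str_gt {k : fieldType} {m : nat} (d : nat) (f : {mpoly k[m]}) (C : nat) : Prop :=
  ~ exists s : nat, (s <= C)%N /\ str_decomp d f s.

Definition multidegree (es : seq nat) : bool :=
  [&& es != [::], sorted geq es & all (fun e => 0 < e)%N es].

Definition tuple_str_gt {k : fieldType} {m : nat} (es : seq nat)
    (h : 'I_(size es) -> {mpoly k[m]}) (C : nat) : Prop :=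
  forall (j : nat) (c : 'I_(size es) -> k),
    (forall i : 'I_(size es), nth 0%N es i != j -> c i = 0) ->
    (exists i, c i != 0) ->
    str_gt j (\sum_(i < size es) c i *: h i) C.

Definition kpoint_zero {k : fieldType} {m s : nat} (h : 'I_s -> {mpoly k[m]})
    (x : 'I_m -> k) : Prop := forall i, (h i).@[x] = 0.

(* The k-points of Z(h) are Zariski dense in Z(h): every polynomial over k
   vanishing on all k-points of Z(h) vanishes on Z(h), i.e. lies in the
   radical of the ideal generated by the h_i. *)
Definition kpoints_dense {k : fieldType} {m s : nat} (h : 'I_s -> {mpoly k[m]}) : Prop :=
  forall p : {mpoly k[m]},
    (forall x : 'I_m -> k, kpoint_zero h x -> p.@[x] = 0) ->
    exists (r : nat) (c : 'I_s -> {mpoly k[m]}), p ^+ r = \sum_(i < s) c i * h i.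

Definition Sigma (k : fieldType) (es : seq nat) : Prop :=
  exists C : nat, forall (m : nat) (h : 'I_(size es) -> {mpoly k[m]}),
    (forall i : 'I_(size es), homog_of (nth 0%N es i) (h i)) ->
    @tuple_str_gt k m es h C -> kpoints_dense h.

Definition SigmaStar (k : fieldType) (d : nat) : Prop :=
  forall es : seq nat, multidegree es -> (head 0%N es < d)%N -> Sigma k es.

From HB Require Import structures.
From mathcomp Require Import all_boot all_order all_algebra.
From mathcomp Require Import mpoly.
From mathcomp Require Import zify.
Import GRing.Theory.
Local Open Scope ring_scope.

(* Brauer gives a nontrivial zero z of the diagonal form sum a_i z_i^e (of
   degree d when e = 0), say with z_i0 <> 0.  For e = 0 the form f does not
   involve x, and x = the i0-th unit vector makes g = b_i0 y_i0^(d-1) nonzero.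
   For e >= 2 take x_i0 = z_i0 t^(d-e), y_i0 = 1 and x_i = z_i, y_i = t^e
   otherwise: then x_i^e y_i^(d-e) = z_i^e t^(e(d-e)) for every i, so f = 0,
   while g = b_i0 z_i0 t^(d-e) + c t^(e(d-1)) with distinct exponents because
   e >= 2, so some t in the infinite field k makes g nonzero. *)

Section InfiniteField.

Context {k : fieldType} (k_infinite : infinite_field k).

Lemma infinite_field_uniq_seq (m : nat) : exists s : seq k, uniq s /\ size s = m.
Proof.
elim: m => [|m [s [s_uniq s_size]]]; first by exists [::].
have [x x_notin_s] := k_infinite s.
by exists (x :: s); rewrite /= x_notin_s s_uniq s_size.
Qed.

Lemma infinite_field_nonroot {p : {poly k}} : p != 0 -> exists t, ~~ root p t.
Proof.
move=> p_neq0; have [s [s_uniq s_size]] := infinite_field_uniq_seq (size p).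
have [all_roots|/allPn [t _ not_root]] := boolP (all (root p) s); last by exists t.
by have := max_poly_roots p_neq0 all_roots s_uniq; rewrite s_size ltnn.
Qed.

Lemma binomial_nonvanishing (c c' : k) (m m' : nat) :
  m != m' -> c != 0 -> exists t, c * t ^+ m + c' * t ^+ m' != 0.
Proof.
move=> m_neq_m' c_neq0; pose p : {poly k} := c *: 'X^m + c' *: 'X^m'.
have p_neq0 : p != 0.
  apply: contra_neq c_neq0 => /(congr1 (coefp m)).
  by rewrite /= coefD !coefZ !coefXn eqxx (negbTE m_neq_m') mulr0 addr0 mulr1 coef0.
have [t not_root] := infinite_field_nonroot p_neq0; exists t.
by move: not_root; rewrite /root hornerD !hornerZ !hornerXn.
Qed.

End InfiniteField.

Lemma subn_lt_mul_pred (d e : nat) : (2 <= e <= d)%N -> (d - e < e * (d - 1))%N.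
Proof. by move=> /andP[e_ge2 e_le_d]; nia. Qed.

Section DiagonalForms.

Context {k : fieldType} {n : nat} {b : 'I_n -> k}.
Hypothesis b_neq0 : forall i, b i != 0.

Lemma exists_diag_form_neq0 (y : 'I_n -> k) (i0 : 'I_n) (m : nat) :
  y i0 != 0 -> exists x : 'I_n -> k, \sum_(i < n) b i * x i * y i ^+ m != 0.
Proof.
move=> y_i0_neq0; exists (fun i => (i == i0)%:R).
rewrite (bigD1 i0) //= eqxx mulr1 big1 ?addr0 ?mulf_neq0 ?expf_neq0 //.
by move=> i /negbTE ->; rewrite mulr0 mul0r.
Qed.

Lemma diag_biform_twist (k_infinite : infinite_field k) (a z : 'I_n -> k)
    (i0 : 'I_n) (d e : nat) :
  (2 <= e <= d)%N -> z i0 != 0 -> \sum_(i < n) a i * z i ^+ e = 0 ->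
  exists x y : 'I_n -> k,
    \sum_(i < n) a i * x i ^+ e * y i ^+ (d - e) = 0 /\
    \sum_(i < n) b i * x i * y i ^+ (d - 1) != 0.
Proof.
move=> e_range z_i0_neq0 z_zero.
pose c := \sum_(i < n | i != i0) b i * z i.
have [t g_neq0] : exists t, b i0 * z i0 * t ^+ (d - e) + c * t ^+ (e * (d - 1)) != 0.
  by apply: binomial_nonvanishing; rewrite ?mulf_neq0 // ltn_eqF ?subn_lt_mul_pred.
exists (fun i => if i == i0 then z i * t ^+ (d - e) else z i).
exists (fun i => if i == i0 then 1 else t ^+ e).
split.
  have term_scaled i : a i * (if i == i0 then z i * t ^+ (d - e) else z i) ^+ e
      * (if i == i0 then 1 else t ^+ e) ^+ (d - e) = a i * z i ^+ e * t ^+ (e * (d - e)).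
    by case: (i == i0); rewrite ?expr1n ?mulr1 ?exprMn -?exprM ?mulrA // mulnC.
  by rewrite (eq_bigr _ (fun i _ => term_scaled i)) -mulr_suml z_zero mul0r.
rewrite (bigD1 i0) //= eqxx expr1n mulr1.
rewrite (eq_bigr (fun i => b i * z i * t ^+ (e * (d - 1)))); last first.
  by move=> i /negbTE ->; rewrite -exprM.
by rewrite -mulr_suml mulrA.
Qed.

End DiagonalForms.

Theorem lemma6p2 (k : fieldType) (hB : Brauer k) (hinf : infinite_field k)
    (d : nat) (hd : (1 <= d)%N) (hS : SigmaStar k d)
    (e : nat) (he : (e <= d)%N) (he1 : e != 1%N) :
  exists C : nat, forall (n : nat) (a b : 'I_n -> k),
    (C < n)%N -> (forall i, b i != 0) ->
    exists x y : 'I_n -> k,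
      \sum_(i < n) a i * x i ^+ e * y i ^+ (d - e) = 0 /\
      \sum_(i < n) b i * x i * y i ^+ (d - 1) != 0.
Proof.
have [e0|e_pos] := posnP e.
  have [N brauer_d] := hB d hd; exists N => n a b n_gt b_neq0.
  have [y [[i0 y_i0_neq0] y_zero]] := brauer_d n a n_gt.
  have [x g_neq0] := exists_diag_form_neq0 b_neq0 y i0 (d - 1)%N y_i0_neq0.
  exists x, y; split=> //.
  by rewrite -[RHS]y_zero e0 subn0; apply: eq_bigr => i _; rewrite expr0 mulr1.
have e_range : (2 <= e <= d)%N by rewrite he andbT ltn_neqAle eq_sym he1.
have [N brauer_e] := hB e e_pos; exists N => n a b n_gt b_neq0.
have [z [[i0 z_i0_neq0] z_zero]] := brauer_e n a n_gt.
exact: (diag_biform_twist b_neq0 hinf _ _ i0 _ _ e_range z_i0_neq0 z_zero).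
Qed.
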